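(* Let $p$ be any sensible $\lambda$-PPM on the set $\Lambda$ of $\lambda$-terms, and let $p_{\mathrm{ctx}}$ be the contextual partial metric defined from an arbitrary enumeration $(\mathtt C_n[-])_{n\in\mathbb N}$ of all contexts by $p_{\mathrm{ctx}}(M,N)=\sum\{2^{-n}\mid \mathtt C_n[M]\text{ unsolvable or }\mathtt C_n[N]\text{ unsolvable}\}$. Then $p\sqsubseteq p_{\mathrm{ctx}}$, i.e. $\mathcal O_{p_{\mathrm{ctx}}}(\Lambda)\subseteq\mathcal O_p(\Lambda)$.
   Context: Contexts are $\lambda$-terms with one hole; solvable means having a head normal form. A partial pseudo-metric (PPM) on $X$ is $p:X\times X\to[0,+\infty]$ with $p(x,x)\leq p(x,y)$, $p(x,y)=p(y,x)$, $p(x,y)\leq p(x,z)+p(z,y)-p(z,z)$. Preorder: $x\leq_p y$ iff $p(x,y)\leq p(x,x)$; $x\simeq_p y$ iff $x\leq_p y$ and $y\leq_p x$. Open balls $B^p_\epsilon(x)=\{y\mid p(y,x)<p(x,x)+\epsilon\}$, and $\mathcal O_p(X)$ is the topology of unions of open balls. For PPMs $p,p'$ on $X$, $p\sqsubseteq p'$ means $\mathcal O_{p'}(X)\subseteq\mathcal O_p(X)$. A $\lambda$-theory is an equivalence on $\Lambda$ closed under application on both sides and under $\lambda$-abstraction and containing $\beta$-conversion. A $\lambda$-PPM is a PPM $p$ on $\Lambda$ such that $\simeq_p$ is a $\lambda$-theory and every context $\mathtt C[-]$ induces a map $\Lambda\to\Lambda$ continuous for $\mathcal O_p(\Lambda)$.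 It is sensible if every unsolvable term $M$ satisfies $M\leq_p N$ for all $N$, and no solvable term has this property. *)

From Stdlib Require Import Reals Arith Relations ClassicalEpsilon.
From Coquelicot Require Import Coquelicot.
Open Scope R_scope.

Inductive term : Type :=
| Var : nat -> term
| App : term -> term -> term
| Lam : term -> term.

Fixpoint lift (k n : nat) (t : term) : term :=
  match t with
  | Var i => if Nat.ltb i k then Var i else Var (i + n)
  | App a b => App (lift k n a) (lift k n b)
  | Lam a => Lam (lift (S k) n a)
  end.

Fixpoint subst (k : nat) (u : term) (t : term) : term :=
  match t with
  | Var i => if Nat.eqb i k then lift 0 k u
             else if Nat.ltb k i then Var (Nat.pred i) else Var i
  | App a b => App (subst k u a) (subst k u b)
  | Lam a => Lam (subst (S k) u a)
  end.

Inductive beta1 : term -> term -> Prop :=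
| beta_redex : forall a b, beta1 (App (Lam a) b) (subst 0 b a)
| beta_appl : forall a a' b, beta1 a a' -> beta1 (App a b) (App a' b)
| beta_appr : forall a b b', beta1 b b' -> beta1 (App a b) (App a b')
| beta_lam : forall a a', beta1 a a' -> beta1 (Lam a) (Lam a').

Definition beta_star : term -> term -> Prop := clos_refl_trans term beta1.
Definition beta_conv : term -> term -> Prop := clos_refl_sym_trans term beta1.

Inductive head_app : term -> Prop :=
| ha_var : forall i, head_app (Var i)
| ha_app : forall a b, head_app a -> head_app (App a b).

Inductive hnf : term -> Prop :=
| hnf_head : forall a, head_app a -> hnf a
| hnf_lam : forall a, hnf a -> hnf (Lam a).

Definition solvable (M : term) : Prop := exists N, beta_star M N /\ hnf N.

Inductive ctx : Type :=
| Hole : ctx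
| CAppL : ctx -> term -> ctx
| CAppR : term -> ctx -> ctx
| CLam : ctx -> ctx.

(* plugging (variable capture allowed, as for contexts) *)
Fixpoint plug (C : ctx) (M : term) : term :=
  match C with
  | Hole => M
  | CAppL C' N => App (plug C' M) N
  | CAppR N C' => App N (plug C' M)
  | CLam C' => Lam (plug C' M)
  end.

(* The triangle law p(x,y) <= p(x,z)+p(z,y)-p(z,z) is written additively,
   p(x,y)+p(z,z) <= p(x,z)+p(z,y), to make sense with +oo values. *)
Definition PPM {X : Type} (p : X -> X -> Rbar) : Prop :=
  (forall x y, Rbar_le (Finite 0) (p x y)) /\
  (forall x y, Rbar_le (p x x) (p x y)) /\
  (forall x y, p x y = p y x) /\
  (forall x y z, Rbar_le (Rbar_plus (p x y) (p z z))
                         (Rbar_plus (p x z) (p z y))).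

Definition ple {X : Type} (p : X -> X -> Rbar) (x y : X) : Prop :=
  Rbar_le (p x y) (p x x).
Definition peq {X : Type} (p : X -> X -> Rbar) (x y : X) : Prop :=
  ple p x y /\ ple p y x.

Definition ball_p {X : Type} (p : X -> X -> Rbar) (x : X) (eps : R) (y : X) : Prop :=
  Rbar_lt (p y x) (Rbar_plus (p x x) (Finite eps)).

Definition open_p {X : Type} (p : X -> X -> Rbar) (U : X -> Prop) : Prop :=
  exists S : X -> R -> Prop,
    (forall x eps, S x eps -> 0 < eps) /\
    (forall y, U y <-> exists x eps, S x eps /\ ball_p p x eps y).

Definition ppm_below {X : Type} (p p' : X -> X -> Rbar) : Prop :=
  forall U, open_p p' U -> open_p p U.

Definition continuous_p {X : Type} (p : X -> X -> Rbar) (f : X -> X) : Prop :=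
  forall U, open_p p U -> open_p p (fun x => U (f x)).

Definition lambda_theory (E : term -> term -> Prop) : Prop :=
  equivalence term E /\
  (forall M N P, E M N -> E (App M P) (App N P)) /\
  (forall M N P, E M N -> E (App P M) (App P N)) /\
  (forall M N, E M N -> E (Lam M) (Lam N)) /\
  (forall M N, beta_conv M N -> E M N).

Definition lambda_PPM (p : term -> term -> Rbar) : Prop :=
  PPM p /\ lambda_theory (peq p) /\
  (forall C : ctx, continuous_p p (plug C)).

Definition sensible (p : term -> term -> Rbar) : Prop :=
  (forall M, ~ solvable M -> forall N, ple p M N) /\
  (forall M, solvable M -> ~ (forall N, ple p M N)).

Definition enumeration (e : nat -> ctx) : Prop :=
  (forall C, exists n, e n = C) /\ (forall n m, e n = e m -> n = m).

Definition ctx_weight (e : nat -> ctx) (M N : term) (n : nat) : R :=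
  if excluded_middle_informative
       (~ solvable (plug (e n) M) \/ ~ solvable (plug (e n) N))
  then (/ 2) ^ n else 0.

Definition p_ctx (e : nat -> ctx) (M N : term) : Rbar :=
  Finite (Series (ctx_weight e M N)).

(** In a sensible λ-PPM the solvable terms form an open set: a solvable [M]
    has some [N] with [M] not below [N], and a small ball around [M] keeps
    every element away from the unsolvable (bottom) terms.  Continuity of
    contexts then makes "[C[M]] is solvable" an open condition for each
    context [C], so a single ball around [y] preserves the solvability of
    [C_0[y], ..., C_K[y]].  On that ball [p_ctx(-, x)] can exceed
    [p_ctx(y, x)] only by the tail [Σ_{n > K} 2^-n], i.e. [p_ctx(-, x)] is
    upper semicontinuous for [O_p], which makes every [p_ctx]-ball [p]-open.
    Self-distances are finite because the constant context [(λ_. x) [-]]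
    maps every term into the open ball [B^p_1(x)]. *)

From Pilot Require Import Defs.
From Stdlib Require Import Reals.
From Coquelicot Require Import Coquelicot.
From Stdlib Require Import Relations Lra Lia Classical ClassicalEpsilon.

Section PartialPseudoMetric.

Context {X : Type} (p : X -> X -> Rbar).
Hypothesis p_PPM : PPM p.

Lemma open_p_diag_finite U y : open_p p U -> U y -> is_finite (p y y).
Proof.
  destruct p_PPM as [p_ge0 [p_diag_le _]].
  intros [S [_ HS]] Uy.
  destruct (proj1 (HS y) Uy) as [x [eps [_ Bxy]]].
  unfold ball_p in Bxy.
  pose proof (p_diag_le y x) as Hyx; pose proof (p_ge0 y y) as Hyy.
  apply is_finite_correct.
  destruct (p x x), (p y x), (p y y); simpl in *; try tauto; eauto.
Qed.

Lemma open_p_ball x eps : 0 < eps -> open_p p (ball_p p x eps).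
Proof.
  intros eps_gt0.
  exists (fun x' eps' => x' = x /\ eps' = eps); split.
  - intros ? ? [_ ->]; exact eps_gt0.
  - intros y; split.
    + intros B; exists x, eps; auto.
    + intros [? [? [[-> ->] B]]]; exact B.
Qed.

Hypothesis diag_finite : forall x, is_finite (p x x).

Let diag_Finite x : p x x = Finite (real (p x x)).
Proof. symmetry; apply diag_finite. Qed.

Lemma ball_p_center x eps : 0 < eps -> ball_p p x eps x.
Proof. unfold ball_p; rewrite (diag_Finite x); simpl; lra. Qed.

Lemma ball_p_le_radius x eps eps' y :
  eps <= eps' -> ball_p p x eps y -> ball_p p x eps' y.
Proof.
  unfold ball_p; rewrite (diag_Finite x).
  destruct (p y x); simpl; intros; lra || tauto.
Qed.

Lemma open_p_nbhs U y : open_p p U -> U y ->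
  exists d, 0 < d /\ forall u, ball_p p y d u -> U u.
Proof.
  destruct p_PPM as [p_ge0 [_ [_ p_tri]]].
  intros [S [S_pos HS]] Uy.
  destruct (proj1 (HS y) Uy) as [x [eps [Sx Bxy]]].
  pose proof (S_pos _ _ Sx) as eps_gt0.
  unfold ball_p in Bxy; rewrite (diag_Finite x) in Bxy.
  pose proof (p_ge0 y x) as Hyx.
  destruct (p y x) as [t| |] eqn:Et; simpl in Bxy, Hyx; try tauto.
  exists (real (p x x) + eps - t); split; [lra|].
  intros u Buy. apply HS. exists x, eps; split; [exact Sx|].
  unfold ball_p in *; rewrite (diag_Finite y) in Buy; rewrite (diag_Finite x).
  pose proof (p_tri u x y) as T; rewrite (diag_Finite y), Et in T.
  pose proof (p_ge0 u y) as Huy; pose proof (p_ge0 u x) as Hux.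
  destruct (p u y), (p u x); simpl in *; try tauto; lra.
Qed.

Lemma open_p_of_nbhs U :
  (forall y, U y -> exists d, 0 < d /\ forall u, ball_p p y d u -> U u) ->
  open_p p U.
Proof.
  intros HU.
  exists (fun x d => 0 < d /\ forall u, ball_p p x d u -> U u); split.
  - intros ? ? [d_gt0 _]; exact d_gt0.
  - intros y; split.
    + intros Uy; destruct (HU y Uy) as [d [d_gt0 Hd]].
      exists y, d; split; [now split | now apply ball_p_center].
    + intros [x [d [[_ Hd] B]]]; exact (Hd _ B).
Qed.

Lemma nbhs_p_finite_inter (W : nat -> X -> Prop) y :
  (forall n, exists d, 0 < d /\ forall u, ball_p p y d u -> W n u) ->
  forall K, exists d, 0 < d /\
    forall u, ball_p p y d u -> forall n, (n <= K)%nat -> W n u.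
Proof.
  intros HW K; induction K as [|K [d [d_gt0 Hd]]].
  - destruct (HW 0%nat) as [d [d_gt0 Hd]].
    exists d; split; [exact d_gt0|].
    intros u Bu n Hn; replace n with 0%nat by lia; auto.
  - destruct (HW (S K)) as [d' [d'_gt0 Hd']].
    exists (Rmin d d'); split; [now apply Rmin_pos|].
    intros u Bu n Hn.
    destruct (Nat.eq_dec n (S K)) as [->|Hne].
    + apply Hd'; apply (ball_p_le_radius _ (Rmin d d')); [apply Rmin_r | exact Bu].
    + apply Hd; [apply (ball_p_le_radius _ (Rmin d d')); [apply Rmin_l | exact Bu]|lia].
Qed.

Lemma not_ple_nbhs x z : ~ ple p x z ->
  exists d, 0 < d /\ forall u, ball_p p x d u -> ~ ple p u z.
Proof.
  destruct p_PPM as [p_ge0 [_ [p_sym p_tri]]].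
  unfold ple; rewrite (diag_Finite x); intros Hxz.
  pose proof (p_ge0 x z) as Hxz0.
  (* [d] is the gap p(x,z) - p(x,x), or 1 when p(x,z) is infinite *)
  assert (Hgap : exists d, 0 < d /\
            Rbar_le (Finite (real (p x x) + d)) (p x z)).
  { destruct (p x z) as [q| |]; simpl in Hxz, Hxz0 |- *; try tauto.
    - exists (q - real (p x x)); split; lra.
    - exists 1; split; [lra | exact I]. }
  destruct Hgap as [d [d_gt0 Hd]].
  exists d; split; [exact d_gt0|].
  unfold ball_p; rewrite (diag_Finite x).
  intros u Bux Huz.
  (* triangle law through [u], with u below z: p(x,z) <= p(x,u) < p(x,x) + d *)
  pose proof (p_tri x z u) as T.
  rewrite (diag_Finite u), (p_sym x u) in T; rewrite (diag_Finite u) in Huz.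
  pose proof (p_ge0 u x) as Hux.
  destruct (p u x), (p u z), (p x z); simpl in *; try tauto; lra.
Qed.

End PartialPseudoMetric.

Lemma Series_le_geom_tail (a b : nat -> R) (N : nat) :
  (forall n, 0 <= a n <= (/2)^n) -> (forall n, 0 <= b n <= (/2)^n) ->
  (forall n, (n <= N)%nat -> b n <= a n) ->
  Series b <= Series a + (/2)^N.
Proof.
  intros Ha Hb Hba.
  assert (Hq : Rabs (/2) < 1) by (rewrite Rabs_pos_eq; lra).
  assert (Hgeom := ex_series_geom _ Hq).
  assert (Hdom : forall c : nat -> R, (forall n, 0 <= c n <= (/2)^n) -> ex_series c).
  { intros c Hc; apply (ex_series_le c (fun n => (/2)^n)); [|exact Hgeom].
    intros n; change (Rabs (c n) <= (/2)^n); rewrite Rabs_pos_eq; apply Hc. }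
  rewrite (Series_incr_n a (S N)), (Series_incr_n b (S N)) by (lia || auto).
  simpl Init.Nat.pred.
  assert (Hhead : sum_f_R0 b N <= sum_f_R0 a N) by (apply sum_Rle; auto).
  assert (Htail_b : Series (fun k => b (S N + k)%nat) <= (/2)^N).
  { apply Rle_trans with (Series (fun k => (/2)^(S N) * (/2)^k)).
    - apply Series_le; [|exact (@ex_series_scal_l R_AbsRing R_NormedModule _ _ Hgeom)].
      intros n; rewrite <- pow_add; apply Hb.
    - rewrite Series_scal_l, Series_geom by exact Hq.
      simpl; field_simplify; lra. }
  assert (Htail_a : 0 <= Series (fun k => a (S N + k)%nat)).
  { rewrite <- (Rmult_0_l (Series (fun _ => 0))), <- Series_scal_l.
    apply Series_le; [intros; rewrite Rmult_0_l; split; [lra | apply Ha]|].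
    apply (ex_series_incr_n a (S N)), Hdom, Ha. }
  lra.
Qed.

Lemma ctx_weight_bounds e M N n : 0 <= ctx_weight e M N n <= (/2)^n.
Proof.
  assert (0 <= (/2)^n) by (apply pow_le; lra).
  unfold ctx_weight; destruct excluded_middle_informative; lra.
Qed.

Lemma ctx_weight_le e u y x n :
  (solvable (plug (e n) y) -> solvable (plug (e n) u)) ->
  ctx_weight e u x n <= ctx_weight e y x n.
Proof.
  intros Hsol; pose proof (ctx_weight_bounds e u x n).
  unfold ctx_weight in *.
  destruct excluded_middle_informative as [Hu|Hu];
    destruct excluded_middle_informative as [Hy|Hy]; try lra.
  exfalso; apply Hy.
  destruct Hu as [Hu|Hu]; [left|right; exact Hu].
  intros Sy; exact (Hu (Hsol Sy)).
Qed.

Lemma solvable_Var i : solvable (Defs.Var i).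
Proof. exists (Defs.Var i); split; [apply rt_refl | apply hnf_head; constructor]. Qed.

Section SensibleLambdaPPM.

Variable p : term -> term -> Rbar.
Hypothesis p_lambda : lambda_PPM p.
Hypothesis p_sensible : sensible p.

Let p_PPM : PPM p := proj1 p_lambda.

Lemma solvable_not_bottom M : solvable M <-> exists N, ~ ple p M N.
Proof.
  destruct p_sensible as [unsolvable_bottom solvable_not_bot]; split.
  - intros SM; exact (not_all_ex_not _ _ (solvable_not_bot M SM)).
  - intros [N HN]; apply NNPP; intros nSM; exact (HN (unsolvable_bottom M nSM N)).
Qed.

Lemma sensible_diag_finite M : is_finite (p M M).
Proof.
  pose proof p_lambda as [[p_ge0 [_ [p_sym _]]] [[_ [_ [_ [_ p_beta]]]] p_cont]].
  set (v := Defs.Var 0).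
  assert (Hv : is_finite (p v v)).
  { destruct (proj1 (solvable_not_bottom v) (solvable_Var 0)) as [N HN].
    unfold ple in HN; pose proof (p_ge0 v v) as Hv0.
    apply is_finite_correct.
    destruct (p v v); simpl in Hv0; try tauto; eauto.
    exfalso; apply HN; destruct (p v N); exact I. }
  set (K := CAppR (Lam (Defs.Var 1)) Hole).
  apply (open_p_diag_finite p p_PPM
           (fun M => ball_p p v 1 (plug K M))).
  - apply p_cont, open_p_ball; lra.
  - assert (HK : peq p (plug K M) v) by (apply p_beta, rst_step, beta_redex).
    destruct HK as [_ HK]; unfold ple, ball_p in *.
    rewrite <- Hv in HK |- *; rewrite p_sym in HK.
    destruct (p (plug K M) v); simpl in *; lra || tauto.
Qed.

Lemma open_p_solvable : open_p p solvable.
Proof.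
  apply (open_p_of_nbhs p sensible_diag_finite).
  intros M SM.
  destruct (proj1 (solvable_not_bottom M) SM) as [N HN].
  destruct (not_ple_nbhs p p_PPM sensible_diag_finite M N HN) as [d [d_gt0 Hd]].
  exists d; split; [exact d_gt0|].
  intros u Bu; apply solvable_not_bottom; exists N; exact (Hd u Bu).
Qed.

Lemma p_ctx_upper_semicontinuous (e : nat -> ctx) x y eps : 0 < eps ->
  exists d, 0 < d /\ forall u, ball_p p y d u ->
    Series (ctx_weight e u x) < Series (ctx_weight e y x) + eps.
Proof.
  intros eps_gt0.
  assert (Hq : Rabs (/2) < 1) by (rewrite Rabs_pos_eq; lra).
  destruct (pow_lt_1_zero _ Hq eps eps_gt0) as [N HN].
  specialize (HN N (le_n N)); rewrite Rabs_pos_eq in HN by (apply pow_le; lra).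
  assert (Hctx_open : forall n, exists d, 0 < d /\ forall u, ball_p p y d u ->
            solvable (plug (e n) y) -> solvable (plug (e n) u)).
  { intros n; destruct (classic (solvable (plug (e n) y))) as [Sy|nSy].
    - destruct (open_p_nbhs p p_PPM sensible_diag_finite _ y
                  (proj2 (proj2 p_lambda) (e n) _ open_p_solvable) Sy)
        as [d [d_gt0 Hd]].
      exists d; split; auto.
    - exists 1; split; [lra | tauto]. }
  destruct (nbhs_p_finite_inter p sensible_diag_finite _ y Hctx_open N)
    as [d [d_gt0 Hd]].
  exists d; split; [exact d_gt0|].
  intros u Bu.
  pose proof (Series_le_geom_tail (ctx_weight e y x) (ctx_weight e u x) N
                (ctx_weight_bounds e y x) (ctx_weight_bounds e u x)
                (fun n Hn => ctx_weight_le e u y x n (Hd u Bu n Hn))).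
  lra.
Qed.

End SensibleLambdaPPM.

Theorem mainTheorem3 :
  forall (p : term -> term -> Rbar) (e : nat -> ctx),
    lambda_PPM p -> sensible p -> enumeration e ->
    ppm_below p (p_ctx e).
Proof.
  intros p e p_lambda p_sensible _ U [S [_ HU]].
  apply (open_p_of_nbhs p (sensible_diag_finite p p_lambda p_sensible)).
  intros y Uy.
  destruct (proj1 (HU y) Uy) as [x [eps [Sx Bxy]]].
  unfold ball_p, p_ctx in Bxy; simpl in Bxy.
  destruct (p_ctx_upper_semicontinuous p p_lambda p_sensible e x y
              (Series (ctx_weight e x x) + eps - Series (ctx_weight e y x)))
    as [d [d_gt0 Hd]]; [lra|].
  exists d; split; [exact d_gt0|].
  intros u Bu; apply HU; exists x, eps; split; [exact Sx|].
  unfold ball_p, p_ctx; simpl.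
  specialize (Hd u Bu); lra.
Qed.
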